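(* Let $G=SL_2$ over $k=\overline{\mathbb F}_p$, $U$ the unipotent radical of the (negative) Borel subgroup, $r\ge1$, and $n$ a positive integer. Then the restriction of the Weyl module $V(np^r)$ to $U_r$ satisfies $V(np^r)|_{U_r}\cong k\oplus (kU_r)^{\oplus n}$.
   Context: $U_r$ is the $r$-th Frobenius kernel of $U$; its group algebra $kU_r=\operatorname{Dist}(U_r)$ is the divided power algebra with basis $x^{(i)}=x^i/i!$, $0\le i\le p^r-1$. For $\lambda\in\mathbb Z_{\ge0}=X(T)_+$, $V(\lambda)$ is the Weyl module of highest weight $\lambda$, which for $SL_2$ is the $\lambda$-th symmetric power of the natural $2$-dimensional module, of dimension $\lambda+1$. *)

From HB Require Import structures.
From mathcomp Require Import all_boot all_order all_algebra all_field.
Set Implicit Arguments. Unset Strict Implicit. Unset Printing Implicit Defensive.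
Import GRing.Theory.
Local Open Scope ring_scope.

(* A (finite-dimensional) module over kU_r = Dist(U_r), U_r the r-th Frobenius
   kernel of U = {[[1,0],[t,1]]}, is given by the matrices (acting on row
   vectors, v |-> v *m A i) by which the divided-power basis elements
   x^(i), 0 <= i < p^r, act. *)

(* Weyl module V(lam) = Sym^lam(k^2), basis e_a = e1^(lam-a) e2^a (a <= lam).
   u(t) = [[1,0],[t,1]] : e1 |-> e1 + t e2, e2 |-> e2, so
   u(t) e_a = sum_i t^i C(lam-a, i) e_(a+i); x^(i) acts by the coefficient
   of t^i:  x^(i) . e_a = C(lam-a,i) e_(a+i). *)
Definition weyl_act (k : fieldType) (lam i : nat) : 'M[k]_(lam.+1) :=
  \matrix_(a, b) (if (b : nat) == (a + i)%N then ('C(lam - a, i))%:R else 0).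

(* The regular module kU_r (p^r = N): x^(i) x^(a) = C(a+i,i) x^(a+i),
   which is 0 when a+i >= N. *)
Definition reg_act (k : fieldType) (N i : nat) : 'M[k]_N :=
  \matrix_(a, b) (if (b : nat) == (a + i)%N then ('C(a + i, i))%:R else 0).

Definition triv_act (k : fieldType) (i : nat) : 'M[k]_1 :=
  ((i == 0%N)%:R)%:M.

Definition triv_plus_free_act (k : fieldType) (N n i : nat)
  : 'M[k]_(1 + \sum_(j < n) N) :=
  block_mx (triv_act k i) 0 0 (\mxdiag_(j < n) reg_act k N i).

Definition kUr_iso (k : fieldType) (N m1 m2 : nat)
  (A : nat -> 'M[k]_m1) (B : nat -> 'M[k]_m2) : Prop :=
  exists (P : 'M[k]_(m1, m2)) (Q : 'M[k]_(m2, m1)),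
    [/\ P *m Q = 1%:M, Q *m P = 1%:M &
        forall i, (i < N)%N -> A i *m P = P *m B i].

From HB Require Import structures.
From mathcomp Require Import all_boot all_order all_algebra all_field.
From mathcomp Require Import zify.
Import GRing.Theory.
Local Open Scope ring_scope.

(* The isomorphism is the signed identity e_a |-> (-1)^a e_a, which matches
   the basis e_0, ..., e_(nN) of V(nN) with the basis of k (+) (kU_r)^n in
   which e_0 spans k and e_(1 + jN + u), u < N, is the vector x^(u) of the
   j-th copy of kU_r.  In both modules x^(i) sends e_a to a multiple of
   e_(a+i), so the intertwining relation reduces to the characteristic p
   identities  C(nN, i) = [i = 0]  and
       C(nN - a, i) = (-1)^i C(u + i, i)    for a = 1 + jN + u,  i < N.
   They follow from three facts about binomial coefficients mod p:
   - periodicity: C(m, i) only depends on m mod N when i < N, because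
     (X + 1)^N = X^N + 1;
   - reflection: C(N-1-u, i) = (-1)^i C(u+i, i), derived from
     C(N-1, b) = (-1)^b;
   - vanishing: C(u+i, i) = 0 when u, i < N <= u + i; this also accounts for
     the products x^(u) x^(i) = 0 that cross a block boundary of (kU_r)^n. *)

Lemma binomial_trinomial {m u i : nat} : (u + i <= m)%N ->
  ('C(m, u) * 'C(m - u, i) = 'C(m, u + i) * 'C(u + i, u))%N.
Proof.
move=> le_uim.
have le_um : (u <= m)%N by lia.
have le_i : (i <= m - u)%N by lia.
have fact_pos : (0 < u`! * i`! * (m - u - i)`!)%N by rewrite !muln_gt0 !fact_gt0.
apply/eqP; rewrite -(eqn_pmul2r fact_pos); apply/eqP.
transitivity (m`!).
  rewrite -(bin_fact le_um) -(bin_fact le_i) !mulnA; congr (_ * _)%N.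
  by rewrite -!mulnA; congr (_ * _)%N; rewrite mulnCA.
rewrite -(bin_fact le_uim) -(bin_fact (leq_addr i u)) addKn subnDA.
by rewrite !mulnA; congr (_ * _)%N; rewrite -!mulnA.
Qed.

Lemma modn_rev (n N s : nat) : (0 < N)%N -> (s < n * N)%N ->
  ((n * N - s.+1) %% N = N.-1 - s %% N)%N.
Proof.
move=> N_gt0 lt_s_nN.
have lt_q : (s %/ N < n)%N by rewrite ltn_divLR.
have lt_u : (s %% N < N)%N by rewrite ltn_pmod.
suff -> : (n * N - s.+1 = (n - (s %/ N).+1) * N + (N.-1 - s %% N))%N.
  by rewrite modnMDl modn_small //; lia.
have e_nN : (n * N = (n - (s %/ N).+1) * N + s %/ N * N + N)%N.
  by rewrite -addnA -mulSnr -mulnDl subnK.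
rewrite e_nN; move: (divn_eq s N) lt_u.
move: ((n - (s %/ N).+1) * N)%N (s %/ N * N)%N (s %% N)%N => X Y u; lia.
Qed.

(* The scalar by which x^(i) acts on the basis vector e_a of k (+) (kU_r)^n:
   a = 0 spans the trivial module, a = 1 + s is x^(s mod N) in block s / N. *)
Definition free_coef (k : fieldType) (N i a : nat) : k :=
  if a is s.+1 then 'C(s %% N + i, i)%:R else (i == 0%N)%:R.

Lemma weyl_act_entry (k : fieldType) (lam i : nat) (a b : 'I_lam.+1) :
  weyl_act k lam i a b = (b == (a + i)%N :> nat)%:R * 'C(lam - a, i)%:R.
Proof. by rewrite mxE; case: eqP; rewrite ?mul1r ?mul0r. Qed.

Lemma block_index {n N : nat} (s : 'I_(\sum_(j < n) N)) :
  tagnat.sig1 s = (s %/ N)%N :> nat /\ tagnat.sig2 s = (s %% N)%N :> nat.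
Proof.
have lt_sig2 : (tagnat.sig2 s < N)%N by [].
have N_gt0 : (0 < N)%N by apply: leq_ltn_trans lt_sig2.
have e_s : s = (tagnat.sig1 s * N + tagnat.sig2 s)%N :> nat.
  rewrite {1}(tagnat.rect s).
  rewrite -(big_ord_widen_cond _ (fun _ => true) (fun _ => N) (ltnW (ltn_ord _))).
  by rewrite sum_nat_const card_ord.
by rewrite e_s divnMDl // modnMDl divn_small ?modn_small ?addn0.
Qed.

Lemma mxdiag_const_entry {V : nmodType} {n N : nat} (f : nat -> nat -> V)
    (s t : 'I_(\sum_(j < n) N)) :
  (\mxdiag_(j < n) (\matrix_(a, b) f a b : 'M[V]_N)) s t =
  if (s %/ N == t %/ N)%N then f (s %% N)%N (t %% N)%N else 0.
Proof.
have [<- <-] := block_index s; have [<- <-] := block_index t.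
rewrite /mxdiag /mxblock mxE; case: eqP => [e | ne].
  by rewrite conform_mx_id mxE e eqxx.
by rewrite mxE; case: eqP => // /val_inj.
Qed.

(* x^(u) x^(i) stays in the block of x^(u) exactly when u + i < N. *)
Lemma same_block_shift (N s t i : nat) : (0 < N)%N ->
  ((s %/ N == t %/ N) && (t %% N == s %% N + i) = (t == s + i) && (s %% N + i < N))%N.
Proof.
move=> N_gt0; apply/andP/andP => [[/eqP e_q /eqP e_u] | [/eqP -> lt_ui]].
  split; last by rewrite -e_u ltn_pmod.
  by rewrite (divn_eq t N) -e_q e_u addnA -divn_eq.
have -> : (s + i = s %/ N * N + (s %% N + i))%N by rewrite addnA -divn_eq.
by rewrite divnMDl // modnMDl (divn_small lt_ui) (modn_small lt_ui) addn0.
Qed.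

Section BinomialCharP.

Variables (k : fieldType) (p r : nat).
Hypothesis charp : p \in [pchar k].
Local Notation N := (p ^ r)%N.

Lemma expN_gt0 : (0 < N)%N.
Proof. by rewrite expn_gt0 prime_gt0 // (pcharf_prime charp). Qed.

Lemma coef_X1_exp (m i : nat) : (('X + 1 : {poly k}) ^+ m)`_i = 'C(m, i)%:R.
Proof.
rewrite exprD1n coef_sum.
under eq_bigr => j _ do rewrite coefMn coefXn.
have [le_im | lt_mi] := leqP i m; last first.
  rewrite bin_small // big1 // => j _; case: eqP => [e_ij | _]; last exact: mul0rn.
  by have := ltn_ord j; rewrite -e_ij ltnS leqNgt lt_mi.
rewrite (bigD1 (Ordinal (le_im : i < m.+1)%N)) //= eqxx mulr1n big1 ?addr0 //.
move=> j ne_ji; case: eqP => [e_ij | _]; last exact: mul0rn.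
by case/negP: ne_ji; apply/eqP/val_inj.
Qed.

Lemma X1_exp_N : ('X + 1 : {poly k}) ^+ N = 'X^N + 1.
Proof.
have charpX : p \in [pchar {poly k}] by rewrite pchar_poly.
rewrite exprDn_pchar ?expr1n // (eq_pnat _ (pcharf_eq charpX)).
by rewrite pnatX pnat_id ?orbT // (pcharf_prime charp).
Qed.

(* Comparing coefficients in (X + 1)^(m + N) = (X + 1)^m (X^N + 1). *)
Lemma binomial_addN (m i : nat) : (i < N)%N -> 'C(m + N, i)%:R = 'C(m, i)%:R :> k.
Proof.
move=> lt_iN.
by rewrite -!coef_X1_exp exprD X1_exp_N mulrDr mulr1 coefD coefMXn lt_iN add0r.
Qed.

Lemma binomial_modN (m i : nat) : (i < N)%N -> 'C(m, i)%:R = 'C(m %% N, i)%:R :> k.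
Proof.
move=> lt_iN; rewrite {1}(divn_eq m N); elim: (m %/ N)%N => [|q IHq].
  by rewrite mul0n add0n.
by rewrite mulSn -addnA addnC binomial_addN.
Qed.

(* C(N, b) = 0 for 0 < b < N, so Pascal's rule gives C(N-1, b) = (-1)^b. *)
Lemma binomial_predN (b : nat) : (b < N)%N -> 'C(N.-1, b)%:R = (-1) ^+ b :> k.
Proof.
elim: b => [|b IHb] lt_bN; first by rewrite bin0.
have : 'C(N, b.+1)%:R = 0 :> k by rewrite -[N]add0n binomial_addN // bin0n.
rewrite -(prednK expN_gt0) binS natrD IHb ?(ltnW lt_bN) // => /eqP.
by rewrite addr_eq0 => /eqP ->; rewrite exprS mulN1r.
Qed.

(* Adding u and i with a carry into the p^r digit kills C(u + i, i). *)
Lemma binomial_carry (u i : nat) :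
  (u < N)%N -> (i < N)%N -> (N <= u + i)%N -> 'C(u + i, i)%:R = 0 :> k.
Proof.
move=> lt_uN lt_iN le_Nui.
by rewrite -(subnK le_Nui) binomial_addN // bin_small //; lia.
Qed.

(* Reflection: C(N-1-u, i) = (-1)^i C(u+i, i) in characteristic p, for
   u, i < N.  When u + i < N this follows from the trinomial revision with
   m = N - 1; otherwise both sides vanish. *)
Lemma binomial_reflect (u i : nat) : (u < N)%N -> (i < N)%N ->
  'C(N.-1 - u, i)%:R = (-1) ^+ i * 'C(u + i, i)%:R :> k.
Proof.
move=> lt_uN lt_iN.
have [lt_uiN | le_Nui] := ltnP (u + i) N; last first.
  by rewrite binomial_carry // mulr0 bin_small //; lia.
have le_uiN1 : (u + i <= N.-1)%N by lia.
have := congr1 (fun m => m%:R : k) (binomial_trinomial le_uiN1).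
have -> : 'C(u + i, u) = 'C(u + i, i) by rewrite -bin_sub ?leq_addr // addKn.
rewrite /= !natrM !binomial_predN ?(leq_ltn_trans (leq_addr i u)) //.
rewrite exprD -mulrA => /(congr1 ( *%R ((-1) ^+ u))).
by rewrite !mulrA -expr2 sqrr_sign !mul1r.
Qed.

Lemma weyl_coef (n i a : nat) : (i < N)%N -> (a <= n * N)%N ->
  'C(n * N - a, i)%:R = (-1) ^+ i * free_coef k N i a :> k.
Proof.
move=> lt_iN le_a.
rewrite binomial_modN //; case: a le_a => [|s] lt_s /=.
  by rewrite subn0 modnMl bin0n; case: i {lt_iN} => [|i]; rewrite /= ?mul1r ?mulr0.
by rewrite modn_rev ?expN_gt0 // binomial_reflect // ltn_pmod ?expN_gt0.
Qed.

(* The entries of the action on (kU_r)^n: x^(i) sends x^(u) of block j to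
   C(u+i, i) x^(u+i), the coefficient vanishing when u + i crosses the block
   boundary. *)
Lemma free_act_entry (n i : nat) (s t : 'I_(\sum_(j < n) N)) : (i < N)%N ->
  (\mxdiag_(j < n) reg_act k N i) s t =
  (t == (s + i)%N :> nat)%:R * 'C((s %% N) + i, i)%:R.
Proof.
move=> lt_iN; rewrite /reg_act.
rewrite (mxdiag_const_entry (fun a b => if b == (a + i)%N then 'C(a + i, i)%:R else 0)).
have lt_uN : (s %% N < N)%N by rewrite ltn_pmod ?expN_gt0.
have [lt_uiN | le_Nui] := ltnP (s %% N + i) N.
  have := same_block_shift N s t i expN_gt0; rewrite lt_uiN andbT => <-.
  by case: eqP; case: eqP; rewrite ?mul1r ?mul0r.
by rewrite binomial_carry // mulr0 !if_same.
Qed.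

Lemma triv_plus_free_act_entry (n i : nat) (c d : 'I_(1 + \sum_(j < n) N)) :
  (i < N)%N -> triv_plus_free_act k N n i c d = (d == (c + i)%N :> nat)%:R * free_coef k N i c.
Proof.
move=> lt_iN; rewrite /triv_plus_free_act.
case: (split_ordP c) => c' ->; case: (split_ordP d) => d' ->.
- rewrite block_mxEul [c']ord1 [d']ord1 !mxE /=.
  by case: i {lt_iN} => [|i]; rewrite ?mul1r ?mul0r.
- rewrite block_mxEur [c']ord1 mxE /= add1n eq_sym.
  by case: i {lt_iN} => [|i]; rewrite ?mulr0 ?mul0r.
- by rewrite block_mxEdl mxE [d']ord1 /= mul0r.
- by rewrite block_mxEdr free_act_entry //= !add1n addSn eqSS.
Qed.

End BinomialCharP.

Definition signed_id (R : comPzRingType) (m1 m2 : nat) : 'M[R]_(m1, m2) :=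
  \matrix_(a, c) ((a == c :> nat)%:R * (-1) ^+ a).

Lemma sum_delta_nat {R : comPzRingType} {m j : nat} {F : 'I_m -> R} {b0 : 'I_m} :
  b0 = j :> nat -> \sum_(b < m) (b == j :> nat)%:R * F b = F b0.
Proof.
move=> e_b0; rewrite (bigD1 b0) //= e_b0 eqxx mul1r big1 ?addr0 // => b ne_b.
case: eqP => [e_b | _]; last by rewrite mul0r.
by case/negP: ne_b; apply/eqP/val_inj; rewrite /= e_b e_b0.
Qed.

Lemma mulmx_signed_id {R : comPzRingType} {m m1 m2 : nat} {M : 'M[R]_(m, m1)}
    {a : 'I_m} {c : 'I_m2} (c' : 'I_m1) :
  c' = c :> nat -> (M *m signed_id R m1 m2) a c = M a c' * (-1) ^+ c.
Proof.
move=> e_c; rewrite mxE; under eq_bigr do rewrite /signed_id mxE mulrCA.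
by rewrite (sum_delta_nat e_c) e_c.
Qed.

Lemma signed_id_mulmx {R : comPzRingType} {m m1 m2 : nat} {M : 'M[R]_(m2, m)}
    {a : 'I_m1} {c : 'I_m} (a' : 'I_m2) :
  a' = a :> nat -> (signed_id R m1 m2 *m M) a c = (-1) ^+ a * M a' c.
Proof.
move=> e_a; rewrite mxE; under eq_bigr do rewrite /signed_id mxE eq_sym -mulrA.
exact: sum_delta_nat.
Qed.

Lemma signed_id_invol (R : comPzRingType) (m1 m2 : nat) :
  m1 = m2 -> signed_id R m1 m2 *m signed_id R m2 m1 = 1%:M.
Proof.
move=> e; apply/matrixP => a a'.
rewrite (mulmx_signed_id (cast_ord e a')) // /signed_id !mxE /=.
have -> : (a == a' :> nat) = (a == a') by [].
by case: eqP => [-> | _]; rewrite ?mul0r // mul1r -expr2 sqrr_sign.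
Qed.

Lemma signed_conj_iso (k : fieldType) (N m1 m2 : nat)
    (A : nat -> 'M[k]_m1) (B : nat -> 'M[k]_m2) : m1 = m2 ->
  (forall i, (i < N)%N -> forall (a b : 'I_m1) (a' b' : 'I_m2),
     a' = a :> nat -> b' = b :> nat -> A i a b * (-1) ^+ b = (-1) ^+ a * B i a' b') ->
  kUr_iso N A B.
Proof.
move=> e signed_AB; exists (signed_id k m1 m2), (signed_id k m2 m1).
split; [exact: signed_id_invol | exact: signed_id_invol | move=> i lt_iN].
apply/matrixP => a c.
rewrite (mulmx_signed_id (cast_ord (esym e) c)) //.
by rewrite (signed_id_mulmx (cast_ord e a)) //; exact: signed_AB.
Qed.

Theorem proposition7p2 (p : nat) (k : closedFieldType)
  (charp : p \in [pchar k])
  (alg_over_Fp : forall x : k, exists m : nat, (0 < m)%N /\ x ^+ (p ^ m) = x)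
  (r n : nat) (hr : (1 <= r)%N) (hn : (0 < n)%N) :
  kUr_iso (p ^ r) (weyl_act k (n * p ^ r)) (triv_plus_free_act k (p ^ r) n).
Proof.
apply: signed_conj_iso => [|i lt_iN a b a' b' e_a e_b].
  by rewrite sum_nat_const card_ord add1n.
rewrite weyl_act_entry triv_plus_free_act_entry // e_a e_b.
case: eqP => [-> | _]; last by rewrite !mul0r mulr0.
rewrite weyl_coef //; last by rewrite -ltnS.
by rewrite !mul1r mulrC exprD -!mulrA [X in _ * X]mulrA -expr2 sqrr_sign mul1r.
Qed.
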